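(* Let $A$ and $B$ be Banach algebras and $\phi$ a nonzero character on $A$. If $A\oplus_\phi B$ is weakly amenable, then $A$ is weakly amenable and $B$ is cyclically amenable, i.e. $\mathcal H^1_c(B,B^* )=0$.
   Context: For Banach algebras $A,B$ and a nonzero character $\phi$ on $A$, the $\phi$-Lau product $A\oplus_\phi B$ is the Banach space $\{(a,b):a\in A,b\in B\}$ with norm $\|a\|+\|b\|$ and product $(a,b)(a',b')=(aa',\ \phi(a)b'+\phi(a')b+bb')$. For a Banach algebra $C$, $C^*$ is a $C$-bimodule via $\langle c\cdot f,x\rangle=f(xc)$, $\langle f\cdot c,x\rangle=f(cx)$; $C$ is weakly amenable if every bounded derivation $D:C\to C^*$ ($D(xy)=x\cdot D(y)+D(x)\cdot y$) is inner ($D(c)=c\cdot f-f\cdot c$ for some $f\in C^*$). A derivation $D:C\to C^*$ is cyclic if $\langle x,D(y)\rangle+\langle y,D(x)\rangle=0$ for all $x,y\in C$; $\mathcal H^1_c(C,C^* )$ is the space of bounded cyclic derivations modulo inner derivations. *)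

From Stdlib Require Import Reals.
Open Scope R_scope.

Record Cx := mkC { re : R; im : R }.
Definition C0 : Cx := mkC 0 0.
Definition C1 : Cx := mkC 1 0.
Definition Cadd (z w : Cx) : Cx := mkC (re z + re w) (im z + im w).
Definition Copp (z : Cx) : Cx := mkC (- re z) (- im z).
Definition Csub (z w : Cx) : Cx := Cadd z (Copp w).
Definition Cmul (z w : Cx) : Cx :=
  mkC (re z * re w - im z * im w) (re z * im w + im z * re w).
Definition Cmod (z : Cx) : R := sqrt (re z * re z + im z * im z).

Record AlgOps := {
  ao_car :> Type;
  ao_add : ao_car -> ao_car -> ao_car;
  ao_scal : Cx -> ao_car -> ao_car;
  ao_mul : ao_car -> ao_car -> ao_car;
  ao_norm : ao_car -> R
}.
Arguments ao_add {_}. Arguments ao_scal {_}. Arguments ao_mul {_}. Arguments ao_norm {_}.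

Record BanachAlgebra := {
  ba_ops :> AlgOps;
  ba_zero : ba_ops;
  ba_opp : ba_ops -> ba_ops;
  ba_add_assoc : forall x y z : ba_ops, ao_add x (ao_add y z) = ao_add (ao_add x y) z;
  ba_add_comm : forall x y : ba_ops, ao_add x y = ao_add y x;
  ba_add_0 : forall x : ba_ops, ao_add x ba_zero = x;
  ba_add_opp : forall x : ba_ops, ao_add x (ba_opp x) = ba_zero;
  ba_scal_assoc : forall (a b : Cx) (x : ba_ops), ao_scal a (ao_scal b x) = ao_scal (Cmul a b) x;
  ba_scal_1 : forall x : ba_ops, ao_scal C1 x = x;
  ba_scal_distr_l : forall (a : Cx) (x y : ba_ops),
      ao_scal a (ao_add x y) = ao_add (ao_scal a x) (ao_scal a y);
  ba_scal_distr_r : forall (a b : Cx) (x : ba_ops),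
      ao_scal (Cadd a b) x = ao_add (ao_scal a x) (ao_scal b x);
  ba_mul_assoc : forall x y z : ba_ops, ao_mul x (ao_mul y z) = ao_mul (ao_mul x y) z;
  ba_mul_distr_l : forall x y z : ba_ops, ao_mul x (ao_add y z) = ao_add (ao_mul x y) (ao_mul x z);
  ba_mul_distr_r : forall x y z : ba_ops, ao_mul (ao_add x y) z = ao_add (ao_mul x z) (ao_mul y z);
  ba_mul_scal_l : forall (a : Cx) (x y : ba_ops), ao_mul (ao_scal a x) y = ao_scal a (ao_mul x y);
  ba_mul_scal_r : forall (a : Cx) (x y : ba_ops), ao_mul x (ao_scal a y) = ao_scal a (ao_mul x y);
  ba_norm_nonneg : forall x : ba_ops, 0 <= ao_norm x;
  ba_norm_eq0 : forall x : ba_ops, ao_norm x = 0 -> x = ba_zero;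
  ba_norm_triangle : forall x y : ba_ops, ao_norm (ao_add x y) <= ao_norm x + ao_norm y;
  ba_norm_scal : forall (a : Cx) (x : ba_ops), ao_norm (ao_scal a x) = Cmod a * ao_norm x;
  ba_norm_mul : forall x y : ba_ops, ao_norm (ao_mul x y) <= ao_norm x * ao_norm y;
  ba_complete : forall u : nat -> ba_ops,
      (forall eps, 0 < eps -> exists N, forall m n, (N <= m)%nat -> (N <= n)%nat ->
          ao_norm (ao_add (u m) (ba_opp (u n))) < eps) ->
      exists l : ba_ops, forall eps, 0 < eps -> exists N, forall n, (N <= n)%nat ->
          ao_norm (ao_add (u n) (ba_opp l)) < eps
}.

Section Derivations.
Variable A : AlgOps.

Definition dual_elem (f : A -> Cx) : Prop :=
  (forall x y : A, f (ao_add x y) = Cadd (f x) (f y)) /\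
  (forall (a : Cx) (x : A), f (ao_scal a x) = Cmul a (f x)) /\
  (exists M : R, forall x : A, Cmod (f x) <= M * ao_norm x).

(* D : A -> A^*, written curried: D c x = <x, D(c)>.
   Bounded linear map into A^* satisfying D(xy) = x.D(y) + D(x).y, where
   <z, x.g> = g(z x) and <z, g.y> = g(y z). *)
Definition bounded_derivation (D : A -> A -> Cx) : Prop :=
  (forall c : A, dual_elem (D c)) /\
  (forall (c d x : A), D (ao_add c d) x = Cadd (D c x) (D d x)) /\
  (forall (a : Cx) (c x : A), D (ao_scal a c) x = Cmul a (D c x)) /\
  (exists M : R, forall c x : A, Cmod (D c x) <= M * ao_norm c * ao_norm x) /\
  (forall (c d z : A), D (ao_mul c d) z = Cadd (D d (ao_mul z c)) (D c (ao_mul d z))).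

Definition inner_derivation (D : A -> A -> Cx) : Prop :=
  exists f : A -> Cx, dual_elem f /\
    forall c x : A, D c x = Csub (f (ao_mul x c)) (f (ao_mul c x)).

Definition cyclic_derivation (D : A -> A -> Cx) : Prop :=
  forall x y : A, Cadd (D y x) (D x y) = C0.

Definition weakly_amenable : Prop :=
  forall D : A -> A -> Cx, bounded_derivation D -> inner_derivation D.

Definition cyclically_amenable : Prop :=
  forall D : A -> A -> Cx, bounded_derivation D -> cyclic_derivation D -> inner_derivation D.

Definition character (phi : A -> Cx) : Prop :=
  (forall x y : A, phi (ao_add x y) = Cadd (phi x) (phi y)) /\
  (forall (a : Cx) (x : A), phi (ao_scal a x) = Cmul a (phi x)) /\
  (forall x y : A, phi (ao_mul x y) = Cmul (phi x) (phi y)) /\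
  (exists x : A, phi x <> C0).

End Derivations.

Definition lau_product (A B : AlgOps) (phi : A -> Cx) : AlgOps := {|
  ao_car := (ao_car A * ao_car B)%type;
  ao_add := fun p q => (ao_add (fst p) (fst q), ao_add (snd p) (snd q));
  ao_scal := fun a p => (ao_scal a (fst p), ao_scal a (snd p));
  ao_mul := fun p q =>
    (ao_mul (fst p) (fst q),
     ao_add (ao_add (ao_scal (phi (fst p)) (snd q)) (ao_scal (phi (fst q)) (snd p)))
            (ao_mul (snd p) (snd q)));
  ao_norm := fun p => ao_norm (fst p) + ao_norm (snd p)
|}.

(* The projection (a, b) |-> a is a contractive homomorphism onto A, so a derivation
   D : A -> A^* pulls back to a derivation of the Lau product.  The projection
   (a, b) |-> b is not multiplicative, but it pulls back a derivation D of B exactly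
   when the extra terms phi(x) (<b, D b'> + <b', D b>) vanish, i.e. when D is cyclic.
   If the pulled-back derivation is implemented by f, then f restricted along the
   embeddings a |-> (a, 0) and b |-> (0, b), both homomorphisms since phi(0) = 0,
   implements D. *)

From Stdlib Require Import Reals Lra.
Open Scope R_scope.

Lemma Cx_eq (z w : Cx) : re z = re w -> im z = im w -> z = w.
Proof. destruct z, w; simpl; intros; subst; reflexivity. Qed.

Lemma Rmult3_le_abs (m p q P Q : R) :
  0 <= p <= P -> 0 <= q <= Q -> m * p * q <= Rabs m * P * Q.
Proof.
  intros Hp Hq.
  pose proof (RRle_abs m). pose proof (Rabs_pos m).
  assert (m * (p * q) <= Rabs m * (p * q)) by (apply Rmult_le_compat_r; nra).
  assert (Rabs m * (p * q) <= Rabs m * (P * Q)) by (apply Rmult_le_compat_l; nra).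
  nra.
Qed.

Lemma Rmult_le_abs (m q Q : R) : 0 <= q <= Q -> m * q <= Rabs m * Q.
Proof.
  intros Hq. pose proof (Rmult3_le_abs m 1 q 1 Q ltac:(lra) Hq). lra.
Qed.

Section BanachAlgebraZero.
Variable X : BanachAlgebra.

Lemma ba_add_idem_eq0 (x : X) : x = ao_add x x -> x = ba_zero X.
Proof.
  intros H. rewrite <- (ba_add_opp X x).
  transitivity (ao_add (ao_add x x) (ba_opp X x)); [|rewrite <- H; reflexivity].
  rewrite <- ba_add_assoc, ba_add_opp, ba_add_0. reflexivity.
Qed.

Lemma ba_add_0l (x : X) : ao_add (ba_zero X) x = x.
Proof. rewrite ba_add_comm; apply ba_add_0. Qed.

Lemma ba_scal_0r (a : Cx) : ao_scal a (ba_zero X) = ba_zero X.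
Proof.
  apply ba_add_idem_eq0. rewrite <- ba_scal_distr_l, ba_add_0. reflexivity.
Qed.

Lemma ba_scal_0l (x : X) : ao_scal C0 x = ba_zero X.
Proof.
  apply ba_add_idem_eq0. rewrite <- ba_scal_distr_r.
  f_equal. apply Cx_eq; simpl; ring.
Qed.

Lemma ba_mul_0l (x : X) : ao_mul (ba_zero X) x = ba_zero X.
Proof.
  apply ba_add_idem_eq0. rewrite <- ba_mul_distr_r, ba_add_0. reflexivity.
Qed.

Lemma ba_norm_0 : ao_norm (ba_zero X) = 0.
Proof.
  rewrite <- (ba_scal_0r C0), ba_norm_scal.
  unfold Cmod; simpl. replace (0 * 0 + 0 * 0) with 0 by ring. rewrite sqrt_0. ring.
Qed.

Lemma additive_map_0 (phi : X -> Cx) :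
  (forall x y : X, phi (ao_add x y) = Cadd (phi x) (phi y)) -> phi (ba_zero X) = C0.
Proof.
  intros Hadd. pose proof (Hadd (ba_zero X) (ba_zero X)) as E.
  rewrite ba_add_0 in E. destruct (phi (ba_zero X)) as [r i].
  unfold Cadd in E; simpl in E. injection E; intros. apply Cx_eq; simpl; lra.
Qed.

End BanachAlgebraZero.

Definition contractive_linear (X Y : AlgOps) (h : X -> Y) : Prop :=
  (forall x y : X, h (ao_add x y) = ao_add (h x) (h y)) /\
  (forall (a : Cx) (x : X), h (ao_scal a x) = ao_scal a (h x)) /\
  (forall x : X, ao_norm (h x) <= ao_norm x).

Definition contractive_hom (X Y : AlgOps) (h : X -> Y) : Prop :=
  contractive_linear X Y h /\ (forall x y : X, h (ao_mul x y) = ao_mul (h x) (h y)).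

Section Comap.
Variables (X : AlgOps) (Y : BanachAlgebra) (h : X -> Y).

Lemma bounded_derivation_comap (D : Y -> Y -> Cx) :
  contractive_linear X Y h -> bounded_derivation Y D ->
  (forall c d z : X, D (h (ao_mul c d)) (h z) =
     Cadd (D (h d) (h (ao_mul z c))) (D (h c) (h (ao_mul d z)))) ->
  bounded_derivation X (fun c z => D (h c) (h z)).
Proof.
  intros [h_add [h_scal h_norm]] [Ddual [Dadd [Dscal [[M HM] _]]]] Dleibniz.
  assert (h_norm_bounds : forall x : X, 0 <= ao_norm (h x) <= ao_norm x)
    by (intros x; split; [apply ba_norm_nonneg | apply h_norm]).
  split; [|split; [|split; [|split]]].
  - intros c. destruct (Ddual (h c)) as [fadd [fscal [M1 HM1]]].
    split; [|split].
    + intros x y. rewrite h_add. apply fadd.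
    + intros a x. rewrite h_scal. apply fscal.
    + exists (Rabs M1). intros x.
      eapply Rle_trans; [apply HM1 | apply Rmult_le_abs, h_norm_bounds].
  - intros c d x. rewrite h_add. apply Dadd.
  - intros a c x. rewrite h_scal. apply Dscal.
  - exists (Rabs M). intros c x.
    eapply Rle_trans; [apply HM | apply Rmult3_le_abs; apply h_norm_bounds].
  - exact Dleibniz.
Qed.

Lemma bounded_derivation_comap_hom (D : Y -> Y -> Cx) :
  contractive_hom X Y h -> bounded_derivation Y D ->
  bounded_derivation X (fun c z => D (h c) (h z)).
Proof.
  intros [h_lin h_mul] HD. apply bounded_derivation_comap; [exact h_lin | exact HD |].
  intros c d z. rewrite !h_mul. apply HD.
Qed.

End Comap.

Lemma inner_derivation_comap (X Y : AlgOps) (h : X -> Y) (D : Y -> Y -> Cx) :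
  (forall y : Y, 0 <= ao_norm y) -> contractive_hom X Y h ->
  inner_derivation Y D -> inner_derivation X (fun c z => D (h c) (h z)).
Proof.
  intros Y_norm_nonneg [[h_add [h_scal h_norm]] h_mul] [f [[fadd [fscal [M HM]]] Hf]].
  exists (fun x => f (h x)). split; [split; [|split]|].
  - intros x y. rewrite h_add. apply fadd.
  - intros a x. rewrite h_scal. apply fscal.
  - exists (Rabs M). intros x.
    eapply Rle_trans; [apply HM | apply Rmult_le_abs].
    split; [apply Y_norm_nonneg | apply h_norm].
  - intros c x. rewrite Hf, !h_mul. reflexivity.
Qed.

Section LauProduct.
Variables (A B : BanachAlgebra) (phi : A -> Cx).
Notation L := (lau_product A B phi).

Lemma lau_norm_nonneg (p : L) : 0 <= ao_norm p.
Proof.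
  destruct p as [a b]; simpl.
  pose proof (ba_norm_nonneg A a); pose proof (ba_norm_nonneg B b); lra.
Qed.

Lemma lau_fst_hom : contractive_hom L A fst.
Proof.
  split; [split; [|split]|]; try reflexivity.
  intros [a b]; simpl. pose proof (ba_norm_nonneg B b); lra.
Qed.

Lemma lau_snd_linear : contractive_linear L B snd.
Proof.
  split; [|split]; try reflexivity.
  intros [a b]; simpl. pose proof (ba_norm_nonneg A a); lra.
Qed.

Lemma lau_inl_hom : contractive_hom A L (fun a => (a, ba_zero B)).
Proof.
  split; [split; [|split]|]; simpl.
  - intros x y. rewrite ba_add_0. reflexivity.
  - intros a x. rewrite ba_scal_0r. reflexivity.
  - intros x. rewrite ba_norm_0. lra.
  - intros x y. rewrite !ba_scal_0r, ba_mul_0l, !ba_add_0. reflexivity.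
Qed.

Lemma lau_inr_hom :
  phi (ba_zero A) = C0 -> contractive_hom B L (fun b => (ba_zero A, b)).
Proof.
  intros phi0. split; [split; [|split]|]; simpl.
  - intros x y. rewrite ba_add_0. reflexivity.
  - intros a x. rewrite ba_scal_0r. reflexivity.
  - intros x. rewrite ba_norm_0. lra.
  - intros x y. rewrite ba_mul_0l, phi0, !ba_scal_0l, !ba_add_0l. reflexivity.
Qed.

Lemma lau_snd_leibniz (D : B -> B -> Cx) :
  bounded_derivation B D -> cyclic_derivation B D ->
  forall c d z : L, D (snd (ao_mul c d)) (snd z) =
    Cadd (D (snd d) (snd (ao_mul z c))) (D (snd c) (snd (ao_mul d z))).
Proof.
  intros [Ddual [Dadd [Dscal [_ Dleibniz]]]] Dcyclic [a b] [a' b'] [x y]; simpl.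
  rewrite !Dadd, !Dscal, Dleibniz.
  destruct (Ddual b') as [add1 [scal1 _]]. destruct (Ddual b) as [add2 [scal2 _]].
  rewrite !add1, !scal1, !add2, !scal2.
  (* the two phi(x)-terms cancel by cyclicity *)
  pose proof (Dcyclic b b') as Hc.
  destruct (D b' b) as [u1 u2]. destruct (D b b') as [v1 v2].
  unfold Cadd, C0 in Hc. injection Hc; intros E2 E1.
  replace v1 with (- u1) by lra. replace v2 with (- u2) by lra.
  apply Cx_eq; simpl; ring.
Qed.

End LauProduct.

Theorem corollary6p16 (A B : BanachAlgebra) (phi : A -> Cx) :
  character A phi ->
  weakly_amenable (lau_product A B phi) ->
  weakly_amenable A /\ cyclically_amenable B.
Proof.
  intros [phi_add _] HW. split.
  - intros D HD.
    apply (inner_derivation_comap _ _ _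
             (fun p q : lau_product A B phi => D (fst p) (fst q))
             (lau_norm_nonneg A B phi) (lau_inl_hom A B phi)).
    apply HW, bounded_derivation_comap_hom; [apply lau_fst_hom | exact HD].
  - intros D HD Dcyclic.
    apply (inner_derivation_comap _ _ _
             (fun p q : lau_product A B phi => D (snd p) (snd q))
             (lau_norm_nonneg A B phi)
             (lau_inr_hom A B phi (additive_map_0 A phi phi_add))).
    apply HW, bounded_derivation_comap;
      [apply lau_snd_linear | exact HD | exact (lau_snd_leibniz A B phi D HD Dcyclic)].
Qed.
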